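(* Let $P=\{x_1,\dots,x_n\}\subset\mathbb{R}^d$, let $x$ be a query with nonnegative weights $w_1,\dots,w_n$, and let $Z_h$ be the $(\mathcal{H},\nu)$-hashing-based estimator. Let $\tilde P=\{i\in[n]:p_i>0\}$ and suppose the indices are ordered so that $p_1\ge p_2\ge\dots\ge p_n$. Then $$\mathbb{E}[Z_h]=\frac1n\sum_{i\in\tilde P}w_i\qquad\text{and}\qquad\mathbb{E}[Z_h^2]\le\frac{1}{n^2}\sum_{i\in\tilde P}\frac{w_i^2}{p_i}\left(i+\sum_{j>i}\frac{p_j}{p_i}\right).$$
   Context: Given a family $\mathcal{H}$ of hash functions on $\mathbb{R}^d$ with a probability distribution $\nu$, sample $h\sim\nu$; let $H(x)=\{i\in[n]:h(x_i)=h(x)\}$, let $I(x)$ be a uniformly random element of $H(x)$, or $\perp$ if $H(x)$ is empty, and let $p_i=\Pr_{h\sim\nu}[i\in H(x)]$, with conventions $p_\perp=1$, $w_\perp=0$. The $(\mathcal{H},\nu)$-hashing-based estimator is $Z_h=Z_h(x)=\frac{w_{I(x)}}{p_{I(x)}}\cdot\frac{|H(x)|}{n}$. *)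

From HB Require Import structures.
From mathcomp Require Import all_boot all_order all_algebra.
From mathcomp Require Import all_classical all_reals all_analysis.
Set Implicit Arguments. Unset Strict Implicit. Unset Printing Implicit Defensive.
Import Order.TTheory GRing.Theory Num.Theory.
Local Open Scope classical_set_scope.
Local Open Scope ring_scope.

(* A random hash function: sample t ~ P (P : probability T R) gives the hash
   function hsh t : 'rV[R]_d -> U (U = buckets).  This is an arbitrary
   distribution nu on the family H = range hsh. *)

Section Defs.
Variables (R : realType) (d n : nat) (T : Type) (U : eqType).
Variables (hsh : T -> 'rV[R]_d -> U) (xs : 'I_n -> 'rV[R]_d) (x : 'rV[R]_d).

Definition collide_set (t : T) : {set 'I_n} := [set i | hsh t (xs i) == hsh t x].

Definition pcoll (mu : set T -> \bar R) (i : 'I_n) : R :=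
  fine (mu [set t | hsh t (xs i) = hsh t x]).
End Defs.

(* Index values extended with bottom (None), with w_bot = 0, p_bot = 1. *)
Definition wopt (R : realType) n (w : 'I_n -> R) (oi : option 'I_n) : R :=
  if oi is Some i then w i else 0.
Definition popt (R : realType) n (p : 'I_n -> R) (oi : option 'I_n) : R :=
  if oi is Some i then p i else 1.

Definition Zval (R : realType) n (w p : 'I_n -> R) (Hs : {set 'I_n})
  (oi : option 'I_n) : R :=
  wopt w oi / popt p oi * (#|Hs|%:R / n%:R).

(* Expectation over I(x), uniform on H(x) = Hs, or I = bottom if Hs is empty *)
Definition Iexp (R : realType) n (g : option 'I_n -> R) (Hs : {set 'I_n}) : R :=
  if Hs == finset.set0 then g None
  else #|Hs|%:R^-1 * \sum_(i in Hs) g (Some i).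

From HB Require Import structures.
From mathcomp Require Import all_boot all_order all_algebra.
From mathcomp Require Import all_classical all_reals all_analysis.
From mathcomp Require Import measurable_realfun ring.
Import Order.TTheory GRing.Theory Num.Theory.
Local Open Scope classical_set_scope.
Local Open Scope ring_scope.

(* Fix the sampled hash function and write A_i for the event i \in H(x), so that
   p_i = P(A_i).  Averaging over the uniform index I in H(x) gives
   E_I[Z] = (1/n) sum_(i in H) w_i/p_i and E_I[Z^2] = (|H|/n^2) sum_(i in H) (w_i/p_i)^2,
   i.e. nonnegative combinations of the indicators of the A_i and of the A_i /\ A_j.
   Integrating, P(A_i) = p_i gives the mean, and for the second moment
   P(A_i /\ A_j) <= min(p_i, p_j) is bounded by p_i for the i+1 indices j <= i and
   by p_j for j > i. *)

Section estimator_given_collisions.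
Variables (R : realType) (n : nat) (w p : 'I_n -> R) (Hs : {set 'I_n}).

Lemma Iexp_Zval : Iexp (Zval w p Hs) Hs = n%:R^-1 * \sum_(i in Hs) w i / p i.
Proof.
rewrite /Iexp /Zval; case: eqP => [->|/eqP Hs0]; first by rewrite big_set0 !mul0r mulr0.
have c0 : #|Hs|%:R != 0 :> R by rewrite pnatr_eq0 -lt0n card_gt0.
by rewrite -mulr_suml mulrCA mulKf // mulrC.
Qed.

Lemma Iexp_Zval_sqr :
  Iexp (fun oi => Zval w p Hs oi ^+ 2) Hs
  = (n%:R ^+ 2)^-1 * \sum_(i in Hs) (w i / p i) ^+ 2 * #|Hs|%:R.
Proof.
rewrite /Iexp /Zval; case: eqP => [->|/eqP Hs0].
  by rewrite big_set0 !mul0r expr0n mulr0.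
have c0 : #|Hs|%:R != 0 :> R by rewrite pnatr_eq0 -lt0n card_gt0.
under eq_bigr do rewrite exprMn.
rewrite -!mulr_suml [(_ / n%:R) ^+ 2]exprMn exprVn.
move: (n%:R ^+ 2)^-1 => m; field.
by rewrite c0.
Qed.

End estimator_given_collisions.

Lemma sum_divfK_pos (R : realFieldType) (I : finType) (w p : I -> R) :
  (forall i, 0 <= p i) -> \sum_i w i / p i * p i = \sum_(i | 0 < p i) w i.
Proof.
move=> p0; rewrite [RHS]big_mkcond; apply: eq_bigr => i _.
have [pi_gt0|pi_le0] := ltP 0 (p i); first by rewrite divfK // gt_eqF.
suff -> : p i = 0 by rewrite mulr0.
by apply/le_anti; rewrite pi_le0 p0.
Qed.

Lemma ler_sum_ord_split (R : numDomainType) n (i : 'I_n) (q b : 'I_n -> R) (a : R) :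
  (forall j, q j <= a) -> (forall j, q j <= b j) ->
  \sum_j q j <= a *+ i.+1 + \sum_(j : 'I_n | (i < j)%N) b j.
Proof.
move=> qa qb; rewrite (bigID (fun j : 'I_n => (i < j)%N)) /= addrC.
apply: lerD; last exact: ler_sum.
have -> : a *+ i.+1 = \sum_(j : 'I_n | ~~ (i < j)%N) a.
  rewrite (eq_bigl (fun j : 'I_n => (j < i.+1)%N)); last by move=> j; rewrite -ltnNge.
  by rewrite -(big_ord_widen _ (fun=> a) (ltn_ord i)) sumr_const card_ord.
exact: ler_sum.
Qed.

Lemma integral_sum_indic (R : realType) (dT : measure_display) (T : measurableType dT)
    (mu : {finite_measure set T -> \bar R}) (I : finType) (a : I -> R) (E : I -> set T) :
  (forall k, 0 <= a k) -> (forall k, measurable (E k)) ->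
  (\int[mu]_t (\sum_k a k * \1_(E k) t)%:E = (\sum_k a k * fine (mu (E k)))%:E)%E.
Proof.
move=> a0 mE.
under eq_integral => t _ do rewrite -sumEFin.
rewrite ge0_integral_sum //; last first.
- by move=> k t _; rewrite lee_fin mulr_ge0.
- by move=> k; apply/measurable_EFinP/measurable_funM => //; exact: measurable_indic.
rewrite -sumEFin; apply: eq_bigr => k _.
rewrite (@integralZl_indic _ _ _ _ _ measurableT (fun=> E k)) //; last by rewrite ltNge a0.
by rewrite integral_indic // setIT EFinM fineK // fin_num_measure.
Qed.

Lemma integral_sum2_indic (R : realType) (dT : measure_display) (T : measurableType dT)
    (mu : {finite_measure set T -> \bar R}) (I J : finType)
    (a : I -> J -> R) (E : I -> J -> set T) :
  (forall i j, 0 <= a i j) -> (forall i j, measurable (E i j)) ->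
  (\int[mu]_t (\sum_i \sum_j a i j * \1_(E i j) t)%:E
    = (\sum_i \sum_j a i j * fine (mu (E i j)))%:E)%E.
Proof.
move=> a0 mE; under eq_integral do rewrite pair_bigA.
by rewrite integral_sum_indic ?pair_bigA // => -[].
Qed.

Section hashing_estimator.
Variables (R : realType) (d n : nat) (dT : measure_display) (T : measurableType dT)
  (P : probability T R) (U : eqType) (hsh : T -> 'rV[R]_d -> U)
  (xs : 'I_n -> 'rV[R]_d) (x : 'rV[R]_d) (w : 'I_n -> R).

Local Notation collision i := [set t | hsh t (xs i) = hsh t x].
Local Notation H := (collide_set hsh xs x).
Local Notation p := (pcoll hsh xs x P).

Hypothesis measurable_collision : forall i, measurable (collision i).
Hypothesis w_ge0 : forall i, 0 <= w i.

Lemma pcoll_ge0 i : 0 <= p i.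
Proof. exact/fine_ge0/measure_ge0. Qed.

Lemma pcollI_le i j : fine (P (collision i `&` collision j)) <= p i.
Proof.
apply: fine_le; rewrite ?fin_num_measure //; first exact: measurableI.
exact: measureIl.
Qed.

Lemma sum_collide_set (f : 'I_n -> R) t :
  \sum_(i in H t) f i = \sum_i f i * \1_(collision i) t.
Proof.
rewrite big_mkcond; apply: eq_bigr => i _; rewrite indicE inE /=.
by case: eqP => h; [rewrite mem_set // mulr1 | rewrite memNset // mulr0].
Qed.

Lemma Iexp_Z_indic t :
  Iexp (Zval w p (H t)) (H t) = \sum_i n%:R^-1 * (w i / p i) * \1_(collision i) t.
Proof.
by rewrite Iexp_Zval sum_collide_set mulr_sumr; under eq_bigr do rewrite mulrA.
Qed.

Lemma Iexp_Z2_indic t :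
  Iexp (fun oi => Zval w p (H t) oi ^+ 2) (H t)
  = \sum_i \sum_j (n%:R ^+ 2)^-1 * (w i / p i) ^+ 2 * \1_(collision i `&` collision j) t.
Proof.
rewrite Iexp_Zval_sqr -sumr_const [\sum_(_ in H t) 1]sum_collide_set.
rewrite sum_collide_set mulr_sumr; apply: eq_bigr => i _.
rewrite mulr_sumr mulr_suml mulr_sumr; apply: eq_bigr => j _.
by rewrite indicI /= mul1r; ring.
Qed.

Lemma mean_estimator :
  (\int[P]_t (Iexp (Zval w p (H t)) (H t))%:E
     = (n%:R^-1 * \sum_(i | 0 < p i) w i)%:E)%E.
Proof.
under eq_integral do rewrite Iexp_Z_indic.
rewrite integral_sum_indic //; last by move=> i; rewrite !mulr_ge0 ?invr_ge0 ?pcoll_ge0.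
rewrite -sum_divfK_pos; last exact: pcoll_ge0.
rewrite mulr_sumr.
by congr (_%:E); apply: eq_bigr => i _; rewrite [RHS]mulrA.
Qed.
Lemma second_moment_estimator_le :
  (\int[P]_t (Iexp (fun oi => Zval w p (H t) oi ^+ 2) (H t))%:E
     <= ((n%:R ^+ 2)^-1 * \sum_(i | 0 < p i)
           (w i ^+ 2 / p i) * (i.+1%:R + \sum_(j : 'I_n | (i < j)%N) p j / p i))%:E)%E.
Proof.
under eq_integral do rewrite Iexp_Z2_indic.
rewrite integral_sum2_indic; last 2 first.
- by move=> i j; rewrite mulr_ge0 ?invr_ge0 ?sqr_ge0.
- by move=> i j; exact: measurableI.
rewrite lee_fin mulr_sumr [leRHS]big_mkcond; apply: ler_sum => i _.
have [pi_gt0|pi_le0] := ltP 0 (p i); last first.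
  (* the terms vanish because w_i / 0 = 0 *)
  have -> : p i = 0 by apply/le_anti; rewrite pi_le0 pcoll_ge0.
  by rewrite big1 // => j _; rewrite invr0 mulr0 expr0n mulr0 mul0r.
rewrite -mulr_sumr -mulr_suml.
have -> : (w i ^+ 2 / p i) * (i.+1%:R + (\sum_(j : 'I_n | (i < j)%N) p j) / p i)
          = (w i / p i) ^+ 2 * (p i *+ i.+1 + \sum_(j : 'I_n | (i < j)%N) p j).
  by move: (\sum_(_ | _) _) => S; rewrite -mulr_natr; field; rewrite gt_eqF.
rewrite [leRHS]mulrA; apply: ler_wpM2l; first by rewrite mulr_ge0 ?invr_ge0 ?sqr_ge0.
apply: ler_sum_ord_split => j; first exact: pcollI_le.
by rewrite setIC; exact: pcollI_le.
Qed.

End hashing_estimator.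

Theorem lemma3 (R : realType) (d n : nat)
  (dT : measure_display) (T : measurableType dT) (P : probability T R)
  (U : eqType) (hsh : T -> 'rV[R]_d -> U)
  (xs : 'I_n -> 'rV[R]_d) (x : 'rV[R]_d) (w : 'I_n -> R) :
  (forall i, measurable [set t | hsh t (xs i) = hsh t x]) ->
  (forall i, 0 <= w i) ->
  (forall i j : 'I_n, (i <= j)%N -> pcoll hsh xs x P j <= pcoll hsh xs x P i) ->
  let p := pcoll hsh xs x P in
  let Z := fun t => Zval w p (collide_set hsh xs x t) in
  (\int[P]_t (Iexp (Z t) (collide_set hsh xs x t))%:E
     = (n%:R^-1 * \sum_(i | 0 < p i) w i)%:E)%E /\
  (\int[P]_t (Iexp (fun oi => Z t oi ^+ 2) (collide_set hsh xs x t))%:E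
     <= ((n%:R ^+ 2)^-1 * \sum_(i | 0 < p i)
           (w i ^+ 2 / p i) * (i.+1%:R + \sum_(j : 'I_n | (i < j)%N) p j / p i))%:E)%E.
Proof.
move=> measurable_collision w_ge0 _ p Z.
split; [exact: mean_estimator | exact: second_moment_estimator_le].
Qed.
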